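(* Let $F \subseteq \mathbb{H}$ intersect every wedge in $\mathbb{H}$. Then there is $u \in \mathbb{S}^+$ such that $T_u(F)$ is dense in $\mathbb{R}$.
   Context: $\mathbb{H} = \{(x,y) \in \mathbb{R}^2 : y > 0\}$, $\mathbb{S}$ is the unit circle in $\mathbb{R}^2$, and $\mathbb{S}^+ = \mathbb{S} \cap \mathbb{H}$. For $u = (u_1,u_2) \in \mathbb{S}$, $T_u : \mathbb{R}^2 \to \mathbb{R}$ is the orthogonal projection parallel to $u$, i.e. $T_u(x) = \langle x,(u_2,-u_1)\rangle$, so $T_u(x) = T_u(y)$ iff $x-y \in \mathbb{R}u$. A wedge in $\mathbb{H}$ is a set of the form $\{tv : t > s, v \in \mathbb{S}, \|v-u\| < \varepsilon\}$ for some $u \in \mathbb{S}^+$ and $s,\varepsilon > 0$, which is contained in $\mathbb{H}$. *)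

From Stdlib Require Import Reals.
Open Scope R_scope.

Definition pt := (R * R)%type.

Definition inH (p : pt) : Prop := 0 < snd p.

Definition inS (u : pt) : Prop := fst u ^ 2 + snd u ^ 2 = 1.
Definition inSplus (u : pt) : Prop := inS u /\ inH u.

Definition dist2 (p q : pt) : R :=
  sqrt ((fst p - fst q) ^ 2 + (snd p - snd q) ^ 2).

Definition T (u x : pt) : R := fst x * snd u + snd x * (- fst u).

Definition wedge_set (u : pt) (s eps : R) (p : pt) : Prop :=
  exists t v, t > s /\ inS v /\ dist2 v u < eps /\
              p = (t * fst v, t * snd v).

Definition is_wedge_in_H (W : pt -> Prop) : Prop :=
  exists u s eps, inSplus u /\ 0 < s /\ 0 < eps /\
    (forall p, W p <-> wedge_set u s eps p) /\
    (forall p, W p -> inH p).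

Definition dense_in_R (A : R -> Prop) : Prop :=
  forall x e, 0 < e -> exists y, A y /\ Rabs (y - x) < e.

(* For a in R let A_a = {x1 - a x2 : x in F}.  If u is the unit vector
   proportional to (a, 1), then T_u(x) = (x1 - a x2) / sqrt (1 + a^2), so it is
   enough to find a with A_a dense.  For fixed q and d > 0 the set of slopes b
   such that |x1 - b x2 - q| < d for some x in F is open, and it is dense: a
   point x of F far out in a thin wedge around the direction (m, 1) makes
   (x1 - q) / x2 arbitrarily close to m.  The Baire category theorem applied to
   these sets, for rational q and d = 1/(k+1), yields the required a. *)

From Stdlib Require Import Reals Lra.
From mathcomp Require Import ssreflect ssrbool ssrnat choice ssralg.
From mathcomp Require Import archimedean rat interval.
From mathcomp Require Import reals classical_sets topology normedtype sequences.
From mathcomp Require Import Rstruct.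
Local Open Scope R_scope.

Definition meets_wedges (F : pt -> Prop) : Prop :=
  forall W : pt -> Prop, is_wedge_in_H W -> exists p, F p /\ W p.

Lemma Rabs_le_dist2 (v u : pt) :
  Rabs (fst v - fst u) <= dist2 v u /\ Rabs (snd v - snd u) <= dist2 v u.
Proof.
rewrite /dist2 -!sqrt_Rsqr_abs /Rsqr.
split; apply: sqrt_le_1_alt.
all: have := pow2_ge_0 (fst v - fst u); have := pow2_ge_0 (snd v - snd u); lra.
Qed.

Lemma inS_coord_bounds (u : pt) : inS u -> Rabs (fst u) <= 1 /\ snd u <= 1.
Proof.
rewrite /inS => Hu; split; last by nra.
by apply: Rabs_le; nra.
Qed.

Lemma slope_close_of_dist2 (u v : pt) (eps : R) :
  inS u -> 0 < snd u -> eps <= snd u / 2 -> dist2 v u < eps ->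
  snd u / 2 < snd v /\
  Rabs (fst v / snd v - fst u / snd u) * snd u ^ 2 < 4 * eps.
Proof.
move=> /inS_coord_bounds [Hu1 Hu2] u2_pos eps_small Hd.
have [Hv1 Hv2] := Rabs_le_dist2 v u.
have v2_big : snd u / 2 < snd v.
  have /Rabs_def2 : Rabs (snd v - snd u) < eps by lra.
  lra.
split=> //.
set D := fst v / snd v - fst u / snd u.
have D_eq : D * (snd v * snd u) =
    (fst v - fst u) * snd u - fst u * (snd v - snd u).
  by rewrite /D; field; lra.
have : Rabs D * (snd v * snd u) < 2 * eps.
  rewrite -(Rabs_pos_eq (snd v * snd u)); last by nra.
  rewrite -Rabs_mult D_eq.
  apply: (Rle_lt_trans _ _ _ (Rabs_triang _ _)).
  rewrite Rabs_Ropp !Rabs_mult (Rabs_pos_eq (snd u)); last by lra.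
  have : Rabs (fst v - fst u) * snd u < eps * snd u.
    by apply: Rmult_lt_compat_r; lra.
  have : Rabs (fst u) * Rabs (snd v - snd u) <= Rabs (snd v - snd u).
    by have := Rabs_pos (snd v - snd u); nra.
  have := Rabs_pos (fst v - fst u); nra.
have : snd u ^ 2 / 2 <= snd v * snd u by nra.
have := Rabs_pos D; nra.
Qed.

Definition slope_dir (m : R) : pt := (m / sqrt (1 + m ^ 2), / sqrt (1 + m ^ 2)).

Lemma sqrt_1_plus_sq_pos (m : R) : 0 < sqrt (1 + m ^ 2).
Proof. by apply: sqrt_lt_R0; have := pow2_ge_0 m; lra. Qed.

Lemma slope_dir_inSplus (m : R) : inSplus (slope_dir m).
Proof.
have N_pos := sqrt_1_plus_sq_pos m.
split; last exact: Rinv_0_lt_compat.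
have N_sq : sqrt (1 + m ^ 2) * sqrt (1 + m ^ 2) = 1 + m ^ 2.
  by apply: sqrt_sqrt; have := pow2_ge_0 m; lra.
rewrite /inS /=.
have -> : (m / sqrt (1 + m ^ 2)) ^ 2 + (/ sqrt (1 + m ^ 2)) ^ 2 =
          (1 + m ^ 2) / (sqrt (1 + m ^ 2) * sqrt (1 + m ^ 2)) by field; lra.
by rewrite N_sq; field; have := pow2_ge_0 m; lra.
Qed.

Lemma slope_dir_ratio (m : R) : fst (slope_dir m) / snd (slope_dir m) = m.
Proof.
by rewrite /=; have := sqrt_1_plus_sq_pos m; set N := sqrt _ => ?; field; lra.
Qed.

Lemma T_slope_dir (m : R) (x : pt) :
  T (slope_dir m) x = (fst x - m * snd x) / sqrt (1 + m ^ 2).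
Proof.
by rewrite /T /=; have := sqrt_1_plus_sq_pos m; set N := sqrt _ => ?; field; lra.
Qed.

Lemma meets_wedges_far_slope (F : pt -> Prop) : meets_wedges F ->
  forall m w B, 0 < w ->
  exists x, F x /\ B < snd x /\ Rabs (fst x / snd x - m) < w.
Proof.
move=> HF m w B w_pos.
have [u_unit u2_pos] := slope_dir_inSplus m.
have u_ratio := slope_dir_ratio m.
set u := slope_dir m in u_unit u2_pos u_ratio; rewrite /inH in u2_pos.
(* The first bound on the aperture keeps the wedge in H, the second controls
   the slope; the radius s makes the second coordinate exceed |B|. *)
set eps := Rmin (snd u / 2) (w * snd u ^ 2 / 4).
have u2_sq_pos : 0 < snd u ^ 2 by apply: pow_lt.
have eps_pos : 0 < eps by apply: Rmin_glb_lt; nra.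
have eps_le : eps <= w * snd u ^ 2 / 4 := Rmin_r _ _.
set s := 2 * (Rabs B + 1) / snd u.
have s_u2 : s * snd u = 2 * (Rabs B + 1) by rewrite /s; field; lra.
have absB_ge0 := Rabs_pos B.
have far_steep : forall p, wedge_set u s eps p ->
    Rabs B < snd p /\ Rabs (fst p / snd p - m) < w.
  move=> _ [t [v [t_gt [_ [Hd ->]]]]] /=.
  have [v2_big slope] :=
    slope_close_of_dist2 u v eps u_unit u2_pos (Rmin_l _ _) Hd.
  have s_pos : 0 < s by nra.
  have -> : t * fst v / (t * snd v) = fst v / snd v by field; nra.
  split; first by nra.
  apply: (Rmult_lt_reg_r (snd u ^ 2)); first by nra.
  by rewrite -u_ratio; lra.
have [|x [Fx /far_steep [Bx Sx]]] := HF (wedge_set u s eps).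
  exists u, s, eps; do 4?split=> //; first by nra.
  by move=> p /far_steep [p2 _]; rewrite /inH; lra.
by exists x; split=> //; have ? := Rle_abs B; split; lra.
Qed.

Definition open_in_R (A : R -> Prop) : Prop :=
  forall b, A b -> exists e, 0 < e /\ forall c, Rabs (c - b) < e -> A c.

Definition slope_window (F : pt -> Prop) (q d b : R) : Prop :=
  exists x, F x /\ Rabs (fst x - b * snd x - q) < d.

Lemma slope_window_open (F : pt -> Prop) (q d : R) :
  open_in_R (slope_window F q d).
Proof.
move=> b [x [Fx Hx]].
have x2_abs := Rabs_pos (snd x).
set r := Rabs (fst x - b * snd x - q) in Hx.
set e := (d - r) / (Rabs (snd x) + 1).
have e_eq : e * (Rabs (snd x) + 1) = d - r by rewrite /e; field; lra.
exists e; split; first by apply: Rdiv_lt_0_compat; lra.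
move=> c Hc; exists x; split=> //.
have -> : fst x - c * snd x - q = (fst x - b * snd x - q) + (b - c) * snd x
  by ring.
apply: (Rle_lt_trans _ _ _ (Rabs_triang _ _)).
rewrite Rabs_mult (Rabs_minus_sym b c) -/r.
have := Rabs_pos (c - b); nra.
Qed.

Lemma slope_window_dense (F : pt -> Prop) (q d : R) :
  meets_wedges F -> 0 < d -> dense_in_R (slope_window F q d).
Proof.
move=> HF d_pos m e e_pos.
set B := 2 * Rabs q / e.
have B_e : B * e = 2 * Rabs q by rewrite /B; field; lra.
have B_ge0 : 0 <= B by have := Rabs_pos q; nra.
have [|x [Fx [x2_big slope]]] := meets_wedges_far_slope F HF m (e / 2) B.
  by lra.
exists ((fst x - q) / snd x); split.
  exists x; split=> //.
  have -> : fst x - (fst x - q) / snd x * snd x - q = 0 by field; lra.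
  by rewrite Rabs_R0.
have -> : (fst x - q) / snd x - m = (fst x / snd x - m) + - q / snd x
  by field; lra.
apply: (Rle_lt_trans _ _ _ (Rabs_triang _ _)).
have q_x2 : Rabs (- q / snd x) * snd x = Rabs q.
  rewrite -{2}(Rabs_pos_eq (snd x)); last by lra.
  by rewrite -Rabs_mult -Rabs_Ropp; congr Rabs; field; lra.
have : e * B < e * snd x by nra.
have := Rabs_pos (- q / snd x); nra.
Qed.

Lemma Baire_R (G : nat -> R -> Prop) :
  (forall n, open_in_R (G n)) -> (forall n, dense_in_R (G n)) ->
  exists a, forall n, G n a.
Proof.
move=> Gopen Gdense.
have ball_RE (x e y : R) : ball (x : R^o) e y <-> Rabs (x - y) < e.
  by rewrite /ball /=; split => /RltP.
have Gopen_dense n : open (G n : set R^o) /\ dense (G n : set R^o).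
  split.
  - move=> b /Gopen [e [e_pos Hb]]; apply/nbhs_ballP; exists e; first exact/RltP.
    by move=> c /ball_RE; rewrite Rabs_minus_sym; apply: Hb.
  - move=> O [y Oy] /(_ y Oy) /nbhs_ballP [e /RltP e_pos yeO].
    have [b [Gb Hb]] := Gdense n y e e_pos.
    by exists b; split=> //; apply/yeO/ball_RE; rewrite Rabs_minus_sym.
have [|a [_ Ga]] := Baire Gopen_dense _ openT; first by exists 0.
by exists a => n; exact: Ga.
Qed.

Definition rational_window (F : pt -> Prop) (n : nat) : R -> Prop :=
  if @unpickle (rat * nat)%type n is Some (r, k)
  then slope_window F (ratr r) (/ INR k.+1) else fun _ => True.

Lemma rational_window_open (F : pt -> Prop) (n : nat) :
  open_in_R (rational_window F n).
Proof.
rewrite /rational_window; case: unpickle => [[r k]|].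
  exact: slope_window_open.
by move=> b _; exists 1; split; [lra|].
Qed.

Lemma rational_window_dense (F : pt -> Prop) (n : nat) :
  meets_wedges F -> dense_in_R (rational_window F n).
Proof.
move=> HF; rewrite /rational_window; case: unpickle => [[r k]|].
  by apply: slope_window_dense => //; apply/Rinv_0_lt_compat/lt_0_INR/ltP.
by move=> x e e_pos; exists x; split=> //; rewrite Rminus_diag Rabs_R0.
Qed.

Lemma dense_of_rational_windows (F : pt -> Prop) (a : R) :
  (forall n, rational_window F n a) ->
  dense_in_R (fun y => exists x, F x /\ y = fst x - a * snd x).
Proof.
move=> Ha z e e_pos.
have [r [lo_r r_hi]] :
    exists r : rat, z - e / 2 < ratr r /\ ratr r < z + e / 2.
  have /RltP /rat_in_itvoo [r] : z - e / 2 < z + e / 2 by lra.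
  by rewrite in_itv /= => /andP [/RltP ? /RltP ?]; exists r.
have [N [N_small /ltP N_pos]] := archimed_cor1 (e / 2) ltac:(lra).
have := Ha (pickle (r, N.-1)); rewrite /rational_window pickleK prednK //.
move=> [x [Fx Hx]]; exists (fst x - a * snd x); split; first by exists x.
have -> : fst x - a * snd x - z =
  (fst x - a * snd x - ratr r) + (ratr r - z) by ring.
apply: (Rle_lt_trans _ _ _ (Rabs_triang _ _)).
have : Rabs (ratr r - z) < e / 2 by apply: Rabs_def1; lra.
lra.
Qed.

Lemma dense_T_slope_dir (F : pt -> Prop) (a : R) :
  dense_in_R (fun y => exists x, F x /\ y = fst x - a * snd x) ->
  dense_in_R (fun y => exists x, F x /\ y = T (slope_dir a) x).
Proof.
move=> Hdense y e e_pos.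
have N_pos := sqrt_1_plus_sq_pos a.
set N := sqrt (1 + a ^ 2) in N_pos.
have [_ [[x [Fx ->]] Hx]] := Hdense (y * N) (e * N) ltac:(nra).
exists (T (slope_dir a) x); split; first by exists x.
rewrite T_slope_dir -/N.
have -> : (fst x - a * snd x) / N - y = (fst x - a * snd x - y * N) * / N
  by field; lra.
rewrite Rabs_mult Rabs_inv (Rabs_pos_eq N); last by lra.
apply: (Rmult_lt_reg_r N) => //.
by rewrite Rmult_assoc Rinv_l; lra.
Qed.

Theorem lemma3p2 (F : pt -> Prop) :
  (forall p, F p -> inH p) ->
  (forall W : pt -> Prop, is_wedge_in_H W -> exists p, F p /\ W p) ->
  exists u, inSplus u /\ dense_in_R (fun y => exists x, F x /\ y = T u x).
Proof.
move=> _ HF.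
have [a Ha] := Baire_R (rational_window F) (rational_window_open F)
  (fun n => rational_window_dense F n HF).
exists (slope_dir a); split; first exact: slope_dir_inSplus.
exact/dense_T_slope_dir/dense_of_rational_windows.
Qed.
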